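(* Let $p<1$, let $k$ be an integer, and let $Y$ be the number of vertices of degree at most $k$ in $\mathcal G(n,p)$. Then $\operatorname{Var}(Y)\le(\mathbb E Y)^2\big(p/(1-p)+1/\mathbb E Y\big)$.
   Context: $\mathcal G(n,p)$ is the Erdős–Rényi random graph on $[n]$, each edge present independently with probability $p$. *)

From mathcomp Require Import all_boot all_order all_algebra.
Set Implicit Arguments. Unset Strict Implicit. Unset Printing Implicit Defensive.
Import Order.TTheory GRing.Theory Num.Theory.

(* Unordered pairs {u,v} of distinct vertices of [n] = 'I_n, encoded as (u,v) with u < v. *)
Definition pair_t (n : nat) := {x : 'I_n * 'I_n | (x.1 < x.2)%N}.

Definition graph (n : nat) := {set pair_t n}.

Definition adj (n : nat) (G : graph n) (u v : 'I_n) : bool :=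
  [exists e in G, (((val e).1 == u) && ((val e).2 == v))
                || (((val e).1 == v) && ((val e).2 == u))].

Definition deg (n : nat) (G : graph n) (v : 'I_n) : nat := #|[set u | adj G u v]|.

Local Open Scope ring_scope.

(* Probability of the graph G in G(n,p): each of the C(n,2) edges present independently w.p. p. *)
Definition gnp_prob (R : nzRingType) (n : nat) (p : R) (G : graph n) : R :=
  p ^+ #|G| * (1 - p) ^+ (#|[set: pair_t n]| - #|G|)%N.

Definition gnp_expect (R : nzRingType) (n : nat) (p : R) (X : graph n -> R) : R :=
  \sum_(G : graph n) gnp_prob p G * X G.

Definition gnp_var (R : nzRingType) (n : nat) (p : R) (X : graph n -> R) : R :=
  gnp_expect p (fun G => (X G - gnp_expect p X) ^+ 2).

Definition Ylow (n : nat) (k : int) (G : graph n) : nat :=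
  #|[set v : 'I_n | ((deg G v)%:Z <= k)%R]|.

From mathcomp Require Import all_boot all_order all_algebra ring.
Set Implicit Arguments. Unset Strict Implicit. Unset Printing Implicit Defensive.
Import Order.TTheory GRing.Theory Num.Theory.
Local Open Scope ring_scope.

(* Write [Y] as a sum of indicators [I_u] of [deg u <= k], and let [q = 1 - p].
   For [u != v], conditioning on the edge [uv] leaves [I_u] and [I_v] depending
   on disjoint edge sets, hence independent. If [a' <= a] are the probabilities
   that at most [k - 1], resp. [k], of the other edges at [u] are present (and
   [b' <= b] likewise at [v]), then [E I_u = p a' + q a], [E I_v = p b' + q b]
   and [E (I_u I_v) = p a' b' + q a b], whence [q E (I_u I_v) <= E I_u E I_v].
   Summing, [E Y^2 <= E Y + (E Y)^2 / q], i.e. [Var Y <= E Y + (E Y)^2 p / q]. *)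

Definition depends_on (T : Type) n (S : {set pair_t n}) (X : graph n -> T) :=
  forall G, X G = X (G :&: S).

Section Expectation.

Variables (R : comNzRingType) (n : nat) (p : R).

Lemma gnp_probE (G : graph n) :
  gnp_prob p G = \prod_(e : pair_t n) (if e \in G then p else 1 - p).
Proof.
rewrite /gnp_prob (bigID (mem G)) /=; symmetry.
rewrite (eq_bigr (fun=> p)); last by move=> e ->.
rewrite [X in _ * X](eq_bigr (fun=> 1 - p)); last by move=> e /negbTE ->.
rewrite !prodr_const; congr (_ * _ ^+ _).
rewrite cardsT -(cardC (mem G)) addKn.
by apply: eq_card => e; rewrite !inE.
Qed.

Lemma sum_graph_prod (F : pair_t n -> bool -> R) :
  \sum_(G : graph n) \prod_(e : pair_t n) F e (e \in G)
  = \prod_(e : pair_t n) (F e true + F e false).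
Proof.
under [RHS]eq_bigr do rewrite -big_bool.
rewrite bigA_distr_bigA /=.
rewrite (reindex (fun f : {ffun pair_t n -> bool} => [set x | f x])) /=.
  by apply: eq_bigr => f _; apply: eq_bigr => e _; rewrite inE.
exists (fun G : graph n => [ffun x => x \in G]) => [f _|G _].
  by apply/ffunP => x; rewrite ffunE inE.
by apply/setP => x; rewrite !inE ffunE.
Qed.

Lemma gnp_prob_sum1 : \sum_(G : graph n) gnp_prob p G = 1.
Proof.
under eq_bigr do rewrite gnp_probE.
rewrite (sum_graph_prod (fun _ b => if b then p else 1 - p)).
by apply: big1 => e _; rewrite addrC subrK.
Qed.

Lemma eq_gnp_expect (X Y : graph n -> R) :
  (forall G, X G = Y G) -> gnp_expect p X = gnp_expect p Y.
Proof. by move=> eqXY; apply: eq_bigr => G _; rewrite eqXY. Qed.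

Lemma gnp_expectD (X Y : graph n -> R) :
  gnp_expect p (fun G => X G + Y G) = gnp_expect p X + gnp_expect p Y.
Proof. by rewrite -big_split; apply: eq_bigr => G _; rewrite mulrDr. Qed.

Lemma gnp_expectMl c (X : graph n -> R) :
  gnp_expect p (fun G => c * X G) = c * gnp_expect p X.
Proof. by rewrite mulr_sumr; apply: eq_bigr => G _; rewrite mulrCA. Qed.

Lemma gnp_expect_cst c : gnp_expect p (fun _ : graph n => c) = c.
Proof. by rewrite /gnp_expect -mulr_suml gnp_prob_sum1 mul1r. Qed.

Lemma gnp_expect_sum (I : finType) (X : I -> graph n -> R) :
  gnp_expect p (fun G => \sum_i X i G) = \sum_i gnp_expect p (X i).
Proof. by rewrite /gnp_expect exchange_big; apply: eq_bigr => G _; rewrite mulr_sumr. Qed.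

Definition swap_on (S : {set pair_t n}) (x : graph n * graph n) :=
  ((x.1 :&: S) :|: (x.2 :&: ~: S), (x.2 :&: S) :|: (x.1 :&: ~: S)).

Lemma swap_onK S : involutive (swap_on S).
Proof.
by case=> G H; congr pair; apply/setP => e; rewrite !inE;
  case: (e \in S); case: (e \in G); case: (e \in H).
Qed.

(* Exchanging the edges in [S] between two independent copies [(G, H)]
   preserves the product measure and turns [X G * Y G] into [X G * Y H]. *)
Lemma gnp_expect_indepM (S : {set pair_t n}) (X Y : graph n -> R) :
  depends_on S X -> depends_on (~: S) Y ->
  gnp_expect p (fun G => X G * Y G) = gnp_expect p X * gnp_expect p Y.
Proof.
move=> dX dY.
pose P2 (x : graph n * graph n) := gnp_prob p x.1 * gnp_prob p x.2.
have -> : gnp_expect p (fun G => X G * Y G) =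
    \sum_x P2 x * (X x.1 * Y x.1).
  rewrite -(pair_bigA _ (fun G H => P2 (G, H) * (X G * Y G))) /P2 /=.
  by apply: eq_bigr => G _; rewrite -mulr_suml -mulr_sumr gnp_prob_sum1 mulr1.
have -> : gnp_expect p X * gnp_expect p Y = \sum_x P2 x * (X x.1 * Y x.2).
  rewrite -(pair_bigA _ (fun G H => P2 (G, H) * (X G * Y H))) /P2 /= mulr_suml.
  apply: eq_bigr => G _; rewrite mulr_sumr.
  by apply: eq_bigr => H _; rewrite mulrACA.
rewrite (reindex_inj (inv_inj (swap_onK S))); apply: eq_bigr => -[G H] _ /=.
congr (_ * (_ * _)).
- rewrite /P2 !gnp_probE -!big_split; apply: eq_bigr => e _ /=; rewrite !inE.
  by case: (e \in S); rewrite ?andbT ?andbF ?orbF // mulrC.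
- rewrite dX [RHS]dX; congr X; apply/setP => e; rewrite !inE.
  by case: (e \in S); case: (e \in G); case: (e \in H).
- rewrite dY [RHS]dY; congr Y; apply/setP => e; rewrite !inE.
  by case: (e \in S); case: (e \in G); case: (e \in H).
Qed.

Lemma gnp_expect_edge (f : pair_t n) :
  gnp_expect p (fun G => (f \in G)%:R) = p.
Proof.
pose F e (b : bool) := (if b then p else 1 - p) * (if e == f then b%:R else 1).
transitivity (\sum_(G : graph n) \prod_e F e (e \in G)).
  apply: eq_bigr => G _; rewrite gnp_probE big_split /=; congr (_ * _).
  by rewrite (bigD1 f) //= eqxx big1 ?mulr1 // => e /negbTE ->.
rewrite sum_graph_prod (bigD1 f) //= /F eqxx mulr1 mulr0 addr0 big1 ?mulr1 //.
by move=> e /negbTE ->; rewrite !mulr1 addrC subrK.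
Qed.

Lemma gnp_expect_nonedge (f : pair_t n) :
  gnp_expect p (fun G => (f \notin G)%:R) = 1 - p.
Proof.
transitivity (gnp_expect p (fun G => 1 + (-1) * (f \in G)%:R)).
  by apply: eq_gnp_expect => G; case: (f \in G); rewrite ?mulr1 ?mulr0 ?addr0 ?subrr.
by rewrite gnp_expectD gnp_expectMl gnp_expect_cst gnp_expect_edge mulN1r.
Qed.

Lemma gnp_expect_split_edge (f : pair_t n) (X Y : graph n -> R) :
  depends_on (~: [set f]) X -> depends_on (~: [set f]) Y ->
  gnp_expect p (fun G => (f \in G)%:R * X G + (f \notin G)%:R * Y G)
  = p * gnp_expect p X + (1 - p) * gnp_expect p Y.
Proof.
move=> dX dY.
have dIn : depends_on [set f] (fun G => (f \in G)%:R : R).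
  by move=> G; rewrite !inE eqxx andbT.
have dOut : depends_on [set f] (fun G => (f \notin G)%:R : R).
  by move=> G; rewrite !inE eqxx andbT.
rewrite gnp_expectD (gnp_expect_indepM dIn) // (gnp_expect_indepM dOut) //.
by rewrite gnp_expect_edge gnp_expect_nonedge.
Qed.

Lemma gnp_varE (X : graph n -> R) :
  gnp_var p X = gnp_expect p (fun G => X G ^+ 2) - gnp_expect p X ^+ 2.
Proof.
rewrite /gnp_var; set m := gnp_expect p X.
transitivity (gnp_expect p (fun G => X G ^+ 2 + (-2 * m * X G + m ^+ 2))).
  by apply: eq_gnp_expect => G; ring.
by rewrite !gnp_expectD gnp_expectMl gnp_expect_cst -/m; ring.
Qed.

End Expectation.

Section Positivity.

Variables (R : numDomainType) (n : nat) (p : R).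
Hypotheses (p_ge0 : 0 <= p) (p_le1 : p <= 1).

Lemma gnp_prob_ge0 (G : graph n) : 0 <= gnp_prob p G.
Proof. by rewrite mulr_ge0 // exprn_ge0 // subr_ge0. Qed.

Lemma ler_gnp_expect (X Y : graph n -> R) :
  (forall G, X G <= Y G) -> gnp_expect p X <= gnp_expect p Y.
Proof. by move=> leXY; apply: ler_sum => G _; rewrite ler_wpM2l ?gnp_prob_ge0. Qed.

Lemma gnp_expect_ge0 (X : graph n -> R) :
  (forall G, 0 <= X G) -> 0 <= gnp_expect p X.
Proof. by move=> X_ge0; apply: sumr_ge0 => G _; rewrite mulr_ge0 ?gnp_prob_ge0. Qed.

End Positivity.

Section Incidence.

Variable n : nat.

Definition incident (u : 'I_n) : {set pair_t n} :=
  [set e : pair_t n | ((val e).1 == u) || ((val e).2 == u)].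

Definition other_end (u : 'I_n) (e : pair_t n) : 'I_n :=
  if (val e).1 == u then (val e).2 else (val e).1.

Definition pair_of_lt (u v : 'I_n) (lt_uv : (u < v)%N) : pair_t n :=
  exist (fun x : 'I_n * 'I_n => (x.1 < x.2)%N) (u, v) lt_uv.

Lemma other_end_inj (u : 'I_n) : {in incident u &, injective (other_end u)}.
Proof.
move=> [[a1 b1] /= l1] [[a2 b2] /= l2]; rewrite !inE /other_end /= => H1 H2 E.
apply: val_inj => /=.
case: (eqVneq a1 u) H1 E => [e1 _|_ /= /eqP e1];
case: (eqVneq a2 u) H2 => [e2 _|_ /= /eqP e2] /= E.
- by rewrite e1 e2 E.
- by move: l1 l2; rewrite e1 e2 E => l1 /(ltn_trans l1); rewrite ltnn.
- by move: l1 l2; rewrite e1 e2 -E => l1 /(ltn_trans l1); rewrite ltnn.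
- by rewrite e1 e2 E.
Qed.

Lemma deg_incident (G : graph n) (u : 'I_n) : deg G u = #|G :&: incident u|.
Proof.
rewrite /deg -(card_in_imset (f := other_end u)); last first.
  by apply: sub_in2 (@other_end_inj u) => e; rewrite inE => /andP[].
apply: eq_card => w; rewrite !inE; apply/idP/imsetP.
- case/existsP => e /andP[eG /orP[/andP[/eqP e1 /eqP e2]|/andP[/eqP e1 /eqP e2]]].
  + exists e; first by rewrite !inE eG e2 eqxx orbT.
    rewrite /other_end e1; case: eqP => // wu.
    by have := valP e; rewrite e1 e2 wu ltnn.
  + by exists e; rewrite ?inE ?eG ?e1 ?eqxx // /other_end e1 eqxx.
- case=> e; rewrite !inE => /andP[eG He] ->; apply/existsP; exists e.
  rewrite eG /= /other_end; case E1: ((val e).1 == u); first by rewrite !eqxx orbT.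
  by move: He; rewrite E1 /= => ->; rewrite eqxx.
Qed.

Lemma pair_of_lt_incident (u v : 'I_n) (lt_uv : (u < v)%N) :
  pair_of_lt lt_uv \in incident u /\ pair_of_lt lt_uv \in incident v.
Proof. by rewrite !inE !eqxx orbT. Qed.

Lemma incidentI (u v : 'I_n) (lt_uv : (u < v)%N) e :
  e \in incident u -> e \in incident v -> e = pair_of_lt lt_uv.
Proof.
case: e => [[a b] /= l]; rewrite !inE /= => Hu Hv; apply: val_inj => /=.
case: (eqVneq a u) Hu => [au _|_ /= /eqP bu].
  case: (eqVneq a v) Hv => [av _|_ /= /eqP bv]; last by rewrite au bv.
  by move: lt_uv; rewrite -au -av ltnn.
case: (eqVneq a v) Hv => [av _|_ /= /eqP bv].
  by move: l; rewrite av bu => /(ltn_trans lt_uv); rewrite ltnn.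
by move: lt_uv; rewrite -bu -bv ltnn.
Qed.

End Incidence.

Definition atmost {R : nzRingType} n (k : int) (S : {set pair_t n}) (G : graph n) : R :=
  ((#|G :&: S|)%:Z <= k)%R%:R.

Definition low {R : nzRingType} n (k : int) (u : 'I_n) (G : graph n) : R :=
  ((deg G u)%:Z <= k)%R%:R.

Lemma atmost_depends (R : nzRingType) n k (S T : {set pair_t n}) :
  S \subset T -> depends_on T (atmost k S : graph n -> R).
Proof. by move=> sST G; rewrite /atmost -setIA (setIidPr sST). Qed.

Lemma atmost_ge0 (R : numDomainType) n k (S : {set pair_t n}) G :
  0 <= atmost k S G :> R.
Proof. exact: ler0n. Qed.

Lemma atmost_le_pred (R : numDomainType) n k (S : {set pair_t n}) G :
  atmost (k - 1) S G <= atmost k S G :> R.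
Proof.
rewrite /atmost; case: (boolP (_ <= k - 1)%R) => [le_k1|_]; last exact: ler0n.
by rewrite (le_trans le_k1) // lerBlDr lerDl.
Qed.

Lemma low_split (R : nzRingType) n k (w : 'I_n) (f : pair_t n) G :
  f \in incident w ->
  low k w G = (f \in G)%:R * atmost (k - 1) (incident w :\ f) G
            + (f \notin G)%:R * atmost k (incident w :\ f) G :> R.
Proof.
move=> fw; rewrite /low /atmost.
have -> : deg G w = ((f \in G) + #|G :&: (incident w :\ f)|)%N.
  rewrite deg_incident (cardsD1 f) inE fw andbT; congr (_ + _)%N.
  by apply: eq_card => e; rewrite !inE andbCA.
case: (f \in G); rewrite ?mul1r ?mul0r ?addr0 ?add0r //.
by rewrite PoszD addrC lerBrDr.
Qed.

Section LowDegreeExpectation.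

Variables (R : comNzRingType) (n : nat) (p : R) (k : int).

Lemma gnp_expect_low (w : 'I_n) (f : pair_t n) : f \in incident w ->
  gnp_expect p (low k w) =
    p * gnp_expect p (atmost (k - 1) (incident w :\ f))
    + (1 - p) * gnp_expect p (atmost k (incident w :\ f)).
Proof.
move=> fw; rewrite (eq_gnp_expect _ (fun G => low_split R k G fw)).
by rewrite gnp_expect_split_edge //; apply: atmost_depends; apply: subsetDr.
Qed.

Lemma gnp_expect_lowM (u v : 'I_n) (lt_uv : (u < v)%N) :
  let Su := incident u :\ pair_of_lt lt_uv in
  let Sv := incident v :\ pair_of_lt lt_uv in
  gnp_expect p (fun G => low k u G * low k v G) =
    p * (gnp_expect p (atmost (k - 1) Su) * gnp_expect p (atmost (k - 1) Sv))
    + (1 - p) * (gnp_expect p (atmost k Su) * gnp_expect p (atmost k Sv)).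
Proof.
move=> Su Sv; set f := pair_of_lt lt_uv.
have [fu fv] := pair_of_lt_incident lt_uv.
have disj_uv : Sv \subset ~: Su.
  apply/subsetP => e; rewrite in_setC !in_setD1 => /andP[ef ev].
  apply/negP => /andP[_ eu].
  by move: ef; rewrite (incidentI lt_uv eu ev) eqxx.
have atmost2_depends j : depends_on (~: [set f])
    (fun G => atmost j Su G * atmost j Sv G : R).
  by move=> G; rewrite -!atmost_depends // subsetDr.
transitivity (gnp_expect p (fun G =>
   (f \in G)%:R * (atmost (k - 1) Su G * atmost (k - 1) Sv G)
   + (f \notin G)%:R * (atmost k Su G * atmost k Sv G))).
  apply: eq_gnp_expect => G; rewrite (low_split R k G fu) (low_split R k G fv).
  by case: (f \in G); rewrite ?mul1r ?mul0r ?addr0 ?add0r.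
rewrite gnp_expect_split_edge //.
by rewrite !(@gnp_expect_indepM _ _ _ Su) //; apply: atmost_depends.
Qed.

End LowDegreeExpectation.

Lemma mixture_productM_le (R : realDomainType) (p a a' b b' : R) :
  0 <= p <= 1 -> 0 <= a' <= a -> 0 <= b' <= b ->
  (1 - p) * (p * (a' * b') + (1 - p) * (a * b))
  <= (p * a' + (1 - p) * a) * (p * b' + (1 - p) * b).
Proof.
move=> /andP[p_ge0 p_le1] /andP[a'_ge0 le_a'a] /andP[b'_ge0 le_b'b].
have q_ge0 : 0 <= 1 - p by rewrite subr_ge0.
rewrite -subr_ge0.
have -> : (p * a' + (1 - p) * a) * (p * b' + (1 - p) * b)
          - (1 - p) * (p * (a' * b') + (1 - p) * (a * b))
        = p * p * (a' * b') + p * (1 - p) * (a' * b + b' * (a - a')) by ring.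
rewrite addr_ge0 ?mulr_ge0 ?subr_ge0 //.
by rewrite addr_ge0 ?mulr_ge0 ?subr_ge0 // (le_trans b'_ge0).
Qed.

Lemma gnp_expect_lowM_le (R : realDomainType) n (p : R) k (u v : 'I_n) :
  0 <= p <= 1 -> u != v ->
  (1 - p) * gnp_expect p (fun G => low k u G * low k v G)
  <= gnp_expect p (low k u) * gnp_expect p (low k v).
Proof.
move=> /andP[p_ge0 p_le1].
wlog lt_uv : u v / (u < v)%N => [wlog_lt|_].
  case: (ltngtP u v) => [|lt_vu _|/val_inj ->]; [exact: wlog_lt| |by rewrite eqxx].
  rewrite [X in _ <= X]mulrC (eq_gnp_expect _ (fun G => mulrC (low k u G) (low k v G))).
  by apply: (wlog_lt v u lt_vu); rewrite neq_ltn lt_vu.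
have [fu fv] := pair_of_lt_incident lt_uv.
rewrite gnp_expect_lowM (gnp_expect_low _ _ fu) (gnp_expect_low _ _ fv).
apply: mixture_productM_le; rewrite ?p_ge0 ?p_le1 //;
  by rewrite gnp_expect_ge0 ?ler_gnp_expect // => G; rewrite ?atmost_ge0 ?atmost_le_pred.
Qed.

Section SumOfIndicators.

Variables (R : realFieldType) (n : nat) (p : R) (I : finType) (X : I -> graph n -> R).
Hypotheses (p_lt1 : p < 1) (X_idem : forall i G, X i G * X i G = X i G).
Hypothesis X_pair_le : forall i j, i != j ->
  (1 - p) * gnp_expect p (fun G => X i G * X j G)
  <= gnp_expect p (X i) * gnp_expect p (X j).

Let q_gt0 : 0 < 1 - p. Proof. by rewrite subr_gt0. Qed.

Lemma gnp_expect_sum_sq_le :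
  gnp_expect p (fun G => (\sum_i X i G) ^+ 2)
  <= gnp_expect p (fun G => \sum_i X i G)
     + gnp_expect p (fun G => \sum_i X i G) ^+ 2 / (1 - p).
Proof.
rewrite (eq_gnp_expect _ (fun G => expr2 _)).
under eq_gnp_expect do rewrite big_distrlr.
rewrite !gnp_expect_sum expr2 big_distrlr mulr_suml -big_split /=.
apply: ler_sum => i _; rewrite gnp_expect_sum.
rewrite (bigD1 i) //= (eq_gnp_expect _ (X_idem i)) lerD2l mulr_suml.
rewrite [X in _ <= X](bigD1 i) //= -[X in X <= _]add0r.
apply: lerD; first by rewrite divr_ge0 -?expr2 ?sqr_ge0 // ltW.
by apply: ler_sum => j ji; rewrite ler_pdivlMr // mulrC X_pair_le // eq_sym.
Qed.

Lemma gnp_var_sum_le (Y : graph n -> R) : (forall G, Y G = \sum_i X i G) ->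
  gnp_var p Y <= gnp_expect p Y ^+ 2 * (p / (1 - p) + 1 / gnp_expect p Y).
Proof.
move=> Y_sum; rewrite gnp_varE.
under eq_gnp_expect do rewrite Y_sum.
rewrite (eq_gnp_expect _ Y_sum); set m := gnp_expect p (fun G => \sum_i X i G).
apply: le_trans (_ : m + m ^+ 2 / (1 - p) - m ^+ 2 <= _).
  by rewrite lerD2r gnp_expect_sum_sq_le.
(* If [m = 0] then [1 / m = 0] and both bounds vanish. *)
have [->|m_neq0] := eqVneq m 0; first by rewrite expr0n /= !mul0r !addr0 subrr.
suff -> : m + m ^+ 2 / (1 - p) - m ^+ 2 = m ^+ 2 * (p / (1 - p) + 1 / m) by [].
by field; rewrite m_neq0 subr_eq0 eq_sym lt_eqF.
Qed.

End SumOfIndicators.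

Lemma Ylow_sum (R : nzRingType) n k (G : graph n) :
  (Ylow k G)%:R = \sum_(u : 'I_n) low k u G :> R.
Proof.
rewrite /Ylow -sum1_card natr_sum big_mkcond; apply: eq_bigr => u _.
by rewrite inE /low; case: ifP.
Qed.

Unset Implicit Arguments.

Theorem lemma4p6 (R : realFieldType) (n : nat) (p : R) (k : int) :
  0 <= p -> p < 1 ->
  gnp_var p (fun G : graph n => (Ylow k G)%:R)
    <= (gnp_expect p (fun G : graph n => (Ylow k G)%:R)) ^+ 2
       * (p / (1 - p) + 1 / gnp_expect p (fun G : graph n => (Ylow k G)%:R)).
Proof.
move=> p_ge0 p_lt1.
apply: (gnp_var_sum_le (X := fun u => low k u)) => // [u G|u v u_neq_v|G].
- by rewrite /low; case: (_ <= k)%R; rewrite ?mulr1 ?mulr0.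
- by apply: gnp_expect_lowM_le; rewrite // p_ge0 ltW.
- exact: Ylow_sum.
Qed.
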